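(* Let $P$ and $Q$ be tabloids of the same shape $\lambda$ with $\lambda_i=\lambda_{i+1}$. Then the dominance constant satisfies \[ r_{i+1}(P,Q)=\operatorname{lch}_i(P)-\operatorname{lch}_i(Q).\]
   Context: Fix $n\ge1$; $\overline i=i+n\mathbb Z$, $[\overline n]=\{\overline1,\dots,\overline n\}$. A tabloid of shape $\lambda$ ($\lambda$ a partition) is a sequence of pairwise disjoint subsets $T_1,T_2,\dots,T_{\ell(\lambda)}$ (rows) of $[\overline n]$ with $|T_r|=\lambda_r$. Broken order: $\overline1<\overline2<\dots<\overline n$. Local charge: suppose rows $k$ and $k+1$ of a tabloid $T$ both have size $m$. List the elements of $T_k$ as $\overline{a_1}<\dots<\overline{a_m}$ in broken order. For $t=1,\dots,m$ in turn, match $\overline{a_t}$ with the smallest (in broken order) not yet matched element of $T_{k+1}$ that is larger than $\overline{a_t}$, if one exists, and otherwise with the smallest not yet matched element of $T_{k+1}$. Then $\operatorname{lch}_k(T)$ is the number of $t$ such that $\overline{a_t}$ is larger (in broken order) than the element it is matched with. Streams: cells are pairs $(i,j)\in\mathbb Z^2$ (row $i$, increasing southward; column $j$, increasing eastward); $(i,j)$ is northwest of $(i',j')$ if $i\le i'$, $j\le j'$; north means smaller row index, west smaller column index. For $A,B\subseteq[\overline n]$ with $|A|=|B|=m\ge1$ and $r\in\mathbb Z$, enumerate $\bigcup A=\{\dots<a_0<a_1<a_2<\dots\}\subseteq\mathbb Z$ with $1\le a_1<\dots<a_m\le n$ and $a_{t+m}=a_t+n$, and similarly $\bigcup B=\{b_t\}$;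 define the stream $\Sigma_r(A,B)=\{(b_t,a_{t+r}):t\in\mathbb Z\}$ (rows from $B$, columns from $A$; $r$ is its altitude). A proper numbering of a stream is an indexing of its cells by $\mathbb Z$, $X^{(t)}$, with $X^{(t+1)}$ southeast of $X^{(t)}$ for all $t$. If $S,T$ are streams with the same $m$, no cell of $S$ sharing a row or column with a cell of $T$, and $S$ is properly numbered, the backward numbering of $T$ with respect to $S$ is the unique proper numbering of $T$ such that $S^{(t)}$ is northwest of $T^{(t)}$ for all $t$ and $S^{(j+1)}$ is not northwest of $T^{(j)}$ for some $j$. Then $T$ is concurrent to $S$ if, with this numbering, there exist $t,j$ with $T^{(t)}$ strictly north of $S^{(t+1)}$ and $T^{(j)}$ strictly west of $S^{(j+1)}$. For tabloids $P,Q$ of shape $\lambda$ with $\lambda_i=\lambda_{i+1}$, the dominance constant $r_{i+1}(P,Q)$ is the unique integer $r$ such that $\Sigma_r(P_{i+1},Q_{i+1})$ is concurrent to $\Sigma_0(P_i,Q_i)$ (such $r$ exists and is unique). *)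

From mathcomp Require Import all_boot all_order all_algebra.
Set Implicit Arguments. Unset Strict Implicit. Unset Printing Implicit Defensive.
Import Order.TTheory GRing.Theory Num.Theory.

(* Elements of [\bar n] = Z/nZ are represented by ordinals x : 'I_n, where
   x stands for the residue class of (val x).+1 \in {1,...,n}.  The broken
   order 1 < 2 < ... < n is thus the order of 'I_n. *)

Definition is_partition (lam : seq nat) : bool :=
  sorted geq lam && all (fun x => 0 < x) lam.

(* 1-based access: lambda_k and row T_k *)
Definition part (lam : seq nat) (k : nat) : nat := nth 0 lam k.-1.
Definition row n (T : seq {set 'I_n}) (k : nat) : {set 'I_n} := nth set0 T k.-1.

Definition is_tabloid n (lam : seq nat) (T : seq {set 'I_n}) : Prop :=
  size T = size lam /\
  (forall k, 1 <= k <= size lam -> #|row T k| = part lam k) /\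
  (forall k l, 1 <= k -> k < l -> l <= size lam -> [disjoint row T k & row T l]).

Definition reps n (A : {set 'I_n}) : seq nat :=
  sort leq [seq (val x).+1 | x <- enum A].

(* as, bs sorted; greedy matching of the statement *)
Fixpoint lch_aux (as_ bs : seq nat) : nat :=
  match as_ with
  | [::] => 0
  | a :: as' =>
      let b := if [seq b <- bs | a < b] is x :: _ then x else head 0 bs in
      (b < a) + lch_aux as' (rem b bs)
  end.

Definition lch n (T : seq {set 'I_n}) (k : nat) : nat :=
  lch_aux (reps (row T k)) (reps (row T k.+1)).

Local Open Scope ring_scope.

(* the enumeration  ... < a_0 < a_1 < ... of \bigcup A \subseteq Z,
   with 1 <= a_1 < ... < a_m <= n and a_{t+m} = a_t + n *)
Definition zenum n (A : {set 'I_n}) (t : int) : int :=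
  let s := reps A in
  let m : int := (size s)%:Z in
  (nth 0%N s (absz ((t - 1) %% m)%Z))%:Z + ((t - 1) %/ m)%Z * n%:Z.

Definition cell := (int * int)%type.  (* (row, column) *)

Definition stream n (A B : {set 'I_n}) (r : int) : cell -> Prop :=
  fun c => exists t : int, c = (zenum B t, zenum A (t + r)).

Definition northwest (c c' : cell) : Prop := c.1 <= c'.1 /\ c.2 <= c'.2.

Definition proper_numbering (S : cell -> Prop) (X : int -> cell) : Prop :=
  (forall t, S (X t)) /\ (forall c, S c -> exists t, X t = c) /\
  injective X /\ (forall t, northwest (X t) (X (t + 1))).

Definition backward_numbering (XS : int -> cell) (T : cell -> Prop)
    (Y : int -> cell) : Prop :=
  proper_numbering T Y /\ (forall t, northwest (XS t) (Y t)) /\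
  (exists j, ~ northwest (XS (j + 1)) (Y j)).

Definition concurrent (T S : cell -> Prop) : Prop :=
  exists XS, proper_numbering S XS /\
  exists Y, backward_numbering XS T Y /\
    (exists t, (Y t).1 < (XS (t + 1)).1) /\
    (exists j, (Y j).2 < (XS (j + 1)).2).

Definition is_dominance_constant n (P Q : seq {set 'I_n}) (i : nat) (r : int)
  : Prop :=
  concurrent (stream (row P i.+1) (row Q i.+1) r) (stream (row P i) (row Q i) 0).

(* A proper numbering of a stream {(z t, w (t + r))} with z strictly increasing
   is a translate t |-> (z (t + c), w (t + c + r)): it is injective, moves
   southeast and is onto, so its index map is an increasing bijection of Z.
   A backward numbering of Sigma_r(P_{i+1}, Q_{i+1}) with respect to
   Sigma_0(P_i, Q_i) is therefore a translate by some e for which the row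
   enumerations satisfy b_t <= b'_{t+e} and the column enumerations
   a_t <= a'_{t+e+r}; concurrency says that both shifts e and e + r are the
   least ones with this property.  For two disjoint rows of equal size m the
   least shift d with a_t <= a'_{t+d} for all t is the local charge: by
   periodicity only t = 1..m matter, where the condition reads
   #{b in row k+1 | b < a_t} <= t - 1 + d, and the greedy matching attains
   the least such d.  Hence e = lch_i(Q) and e + r = lch_i(P). *)

From Pilot Require Import Defs.
From mathcomp Require Import all_boot all_order all_algebra zify.
From Stdlib Require Import Classical.

Set Implicit Arguments.
Unset Strict Implicit.
Unset Printing Implicit Defensive.

Import Order.TTheory GRing.Theory Num.Theory.

Lemma count_lt_nth (s : seq nat) (a i : nat) : sorted ltn s -> i < size s ->
  (nth 0 s i < a) = (i < count (fun b => b < a) s).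
Proof.
elim: s i => [//|b s IH] i sb /=; have b_min := order_path_min ltn_trans sb.
have [ba | ab] := ltnP b a.
  by case: i => [|i] //= hi; rewrite add1n ltnS IH // (path_sorted sb).
have -> : count (fun x => x < a) s = 0.
  apply/eqP; rewrite -leqn0 leqNgt -has_count; apply/hasP => -[x /(allP b_min)].
  by rewrite /=; lia.
case: i => [|i] /= hi; first by rewrite ltnNge ab.
apply/negbTE; rewrite -leqNgt.
by have := allP b_min _ (mem_nth 0 (hi : i < size s)); rewrite /=; lia.
Qed.

Definition lch_bound (as_ bs : seq nat) (d : nat) : Prop :=
  forall t, t < size as_ -> count (fun b => b < nth 0 as_ t) bs <= t + d.

Lemma lch_bound_below (as_ bs : seq nat) (d : nat) : size as_ = size bs ->
  (forall a b, a \in as_ -> b \in bs -> b < a) ->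
  lch_bound as_ bs d <-> size bs <= d.
Proof.
move=> sz below.
have full t : t < size as_ -> count (fun b => b < nth 0 as_ t) bs = size bs.
  move=> ht; apply/eqP; rewrite -all_count; apply/allP => b.
  exact: below (mem_nth 0 ht).
split=> [bound | bs_d t ht]; last by rewrite full // (leq_trans bs_d) ?leq_addl.
case: as_ sz full bound {below} => [<- //|a as' _ full /(_ 0 isT)].
by rewrite full.
Qed.

Lemma lch_bound_cons_above (a : nat) (as' bs : seq nat) (b0 d : nat) :
  sorted ltn (a :: as') -> size (a :: as') = size bs ->
  (forall x, x \in a :: as' -> x \notin bs) ->
  b0 \in bs -> a < b0 -> (forall b, b \in bs -> a < b -> b0 <= b) ->
  lch_bound (a :: as') bs d <-> lch_bound as' (rem b0 bs) d.
Proof.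
move=> sa sz dj b0_in a_b0 b0_min.
have a_min : all (ltn a) as' := order_path_min ltn_trans sa.
have a_notin : a \notin bs by apply: dj; rewrite inE eqxx.
have countE x :
    count (fun b => b < x) bs = count (fun b => b < x) (rem b0 bs) + (b0 < x).
  by rewrite (permP (perm_to_rem b0_in)) /= addnC.
have count_a : count (fun b => b < a) bs = count (fun b => b < a) (rem b0 bs).
  by rewrite countE (leq_gtF (ltnW a_b0)) addn0.
split=> bound t.
- move=> ht; have a_at := allP a_min _ (mem_nth 0 ht).
  have := bound t.+1 ht; rewrite /= countE.
  have [_|at_b0] := ltnP b0 (nth 0 as' t); first lia.
  rewrite addn0 => _.
  have at_lt_b0 : nth 0 as' t < b0.
    rewrite ltn_neqAle at_b0 andbT; apply/eqP => at_eq.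
    by have := dj (nth 0 as' t); rewrite inE mem_nth ?orbT // at_eq b0_in => /(_ isT).
  have -> : count (fun b => b < nth 0 as' t) (rem b0 bs) =
            count (fun b => b < a) (rem b0 bs).
    apply: eq_in_count => b /mem_rem b_in /=.
    apply/idP/idP => [b_at | b_a]; last exact: ltn_trans b_a a_at.
    rewrite ltnNge; apply/negP => a_b.
    have a_lt_b : a < b.
      by rewrite ltn_neqAle a_b andbT; apply: contraNneq a_notin => ->.
    by have := b0_min b b_in a_lt_b; lia.
  by have := bound 0 isT; rewrite /= -count_a; lia.
- case: t => [_ | t ht] /=; last first.
    by rewrite countE; have := bound t ht; case: (b0 < _) => /=; lia.
  rewrite count_a.
  case: as' sa sz a_min bound {dj} => [_ sz _ _ | a1 as'' _ _ /andP[a_a1 _] /(_ 0 isT)].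
    by apply: leq_trans (count_size _ _) _; rewrite size_rem // -sz.
  by apply: leq_trans; apply: sub_count => b /= b_a; apply: ltn_trans b_a a_a1.
Qed.

Lemma lch_aux_leP (as_ bs : seq nat) (d : nat) :
  sorted ltn as_ -> sorted ltn bs -> size as_ = size bs ->
  (forall x, x \in as_ -> x \notin bs) ->
  lch_aux as_ bs <= d <-> lch_bound as_ bs d.
Proof.
elim: as_ bs d => [|a as' IH] bs d sa sb sz dj; first by split.
have sa' := path_sorted sa.
have a_min : all (ltn a) as' := order_path_min ltn_trans sa.
have a_notin : a \notin bs by apply: dj; rewrite inE eqxx.
have dj' x : x \in as' -> x \notin bs by move=> x_in; apply: dj; rewrite inE x_in orbT.
rewrite /=; case E: [seq b <- bs | a < b] => [|b0 l].
- case: bs sb sz dj dj' a_notin E => [//|b bs'] sb sz dj dj' a_notin E.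
  have below x : x \in b :: bs' -> x < a.
    move=> x_in; have : x \notin [seq b <- b :: bs' | a < b] by rewrite E.
    rewrite mem_filter x_in andbT -leqNgt => x_a.
    by rewrite ltn_neqAle x_a andbT; apply: contraNneq a_notin => <-.
  rewrite /= eqxx below ?mem_head // add1n (lch_bound_below d sz); last first.
    move=> x y /[!inE] /orP[/eqP -> | x_in] /below // y_a.
    exact: ltn_trans y_a (allP a_min x x_in).
  case: d => [|d]; first by rewrite !ltn0.
  have sz' : size as' = size bs' by case: sz.
  have dj_tail x : x \in as' -> x \notin bs'.
    by move=> /dj'; rewrite inE negb_or => /andP[].
  rewrite !ltnS (IH _ _ sa' (path_sorted sb) sz' dj_tail) (lch_bound_below d sz') //.
  move=> x y x_in y_in; have y_a : y < a by rewrite below // inE y_in orbT.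
  exact: ltn_trans y_a (allP a_min x x_in).
- have : b0 \in [seq b <- bs | a < b] by rewrite E mem_head.
  rewrite mem_filter => /andP[a_b0 b0_in].
  have b0_min b : b \in bs -> a < b -> b0 <= b.
    move=> b_in a_b; have : b \in b0 :: l by rewrite -E mem_filter a_b b_in.
    have := sorted_filter ltn_trans (fun b => a < b) sb.
    rewrite E => /(order_path_min ltn_trans) /allP l_gt.
    by rewrite inE => /orP[/eqP -> // | /l_gt /ltnW].
  rewrite (leq_gtF (ltnW a_b0)) add0n.
  rewrite IH //.
    exact: iff_sym (lch_bound_cons_above d sa sz dj b0_in a_b0 b0_min).
  + exact (subseq_sorted ltn_trans (rem_subseq b0 bs) sb).
  + by rewrite size_rem //= -sz.
  + by move=> x /dj'; apply: contra; apply: mem_rem.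
Qed.

Local Open Scope ring_scope.

Lemma homo_ltz_lt (f : int -> int) :
  (forall t, f t < f (t + 1)) -> {homo f : u v / u < v}.
Proof.
move=> f_succ u v uv.
have f_nat : {homo (fun k : nat => f (u + k%:Z)) : i j / (i < j)%N >-> i < j}.
  by apply: homo_ltn => [y x z|k]; [exact: lt_trans | rewrite -addn1 PoszD addrA].
have -> : v = u + `|v - u|%N%:Z by lia.
by rewrite -[u in f u]addr0; apply: f_nat; lia.
Qed.

Lemma int_succ_translation (f : int -> int) :
  (forall t, f (t + 1) = f t + 1) -> forall t, f t = t + f 0.
Proof.
move=> f_succ; elim/int_rec => [|k IH|k IH]; first by rewrite add0r.
  by rewrite -addn1 PoszD f_succ IH addrAC.
have := f_succ (- k.+1%:Z); have -> : - k.+1%:Z + 1 = - k%:Z by lia.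
by rewrite IH; lia.
Qed.

Lemma incr_surj_translation (f : int -> int) :
  {homo f : u v / u < v} -> (forall k, exists t, f t = k) -> forall t, f t = t + f 0.
Proof.
move=> f_lt f_onto; apply: int_succ_translation => t.
have [u fu] := f_onto (f t + 1).
have ft_lt := f_lt t (t + 1) (ltrDl _ _).
case: (ltgtP u (t + 1)) => [u_lt | u_gt | u_eq]; last by rewrite -u_eq.
- have : f u <= f t by rewrite (le_mono f_lt); lia.
  by rewrite fu; lia.
- by have := f_lt _ _ u_gt; rewrite fu; lia.
Qed.

Section PeriodicEnum.
Variables (s : seq nat) (n : nat).
Local Notation m := (size s).

(* [zenum A] unfolds to [periodic_enum (reps A) n]. *)
Definition periodic_enum (t : int) : int :=
  (nth 0%N s (absz ((t - 1) %% m%:Z)%Z))%:Z + ((t - 1) %/ m%:Z)%Z * n%:Z.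

Hypothesis s_pos : (0 < m)%N.

Lemma periodic_enum_nth (t0 : nat) (q : int) : (t0 < m)%N ->
  periodic_enum (t0%:Z + 1 + q * m%:Z) = (nth 0%N s t0)%:Z + q * n%:Z.
Proof.
move=> t0_lt; have m_neq0 : m%:Z != 0 by rewrite eqz_nat -lt0n.
have t0_range : (0 <= t0%:Z < m%:Z) by rewrite ltz_nat t0_lt.
rewrite /periodic_enum addrAC addrK addrC.
by rewrite divzMDl // divz_small // addr0 modzMDl modz_small.
Qed.

Lemma periodic_enum_cover (t : int) :
  exists t0 (q : int), (t0 < m)%N /\ t = t0%:Z + 1 + q * m%:Z.
Proof.
have m_gt0 : 0 < m%:Z by rewrite ltz_nat.
exists (absz ((t - 1) %% m%:Z)%Z), ((t - 1) %/ m%:Z)%Z.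
rewrite -ltz_nat gez0_abs ?modz_ge0 ?gt_eqF // ltz_pmod //; split=> //.
by have := divz_eq (t - 1) m%:Z; lia.
Qed.

Lemma periodic_enum_shift (u q : int) :
  periodic_enum (u + q * m%:Z) = periodic_enum u + q * n%:Z.
Proof.
have [t0 [q1 [t0_lt ->]]] := periodic_enum_cover u.
by rewrite -addrA -mulrDl !periodic_enum_nth // mulrDl addrA.
Qed.

Hypothesis s_sorted : sorted ltn s.
Hypothesis s_range : forall x, x \in s -> (0 < x <= n)%N.

Lemma periodic_enum_lt : {homo periodic_enum : u v / u < v}.
Proof.
apply: homo_ltz_lt => t; have [t0 [q [t0_lt ->]]] := periodic_enum_cover t.
have [t1_lt | t1_ge] := ltnP t0.+1 m.
  have -> : t0%:Z + 1 + q * m%:Z + 1 = t0.+1%:Z + 1 + q * m%:Z by lia.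
  rewrite !periodic_enum_nth // ltrD2r ltz_nat.
  by apply: (sorted_ltn_nth ltn_trans 0%N s_sorted); rewrite ?inE.
have t0_last : t0.+1 = m by apply/eqP; rewrite eqn_leq t0_lt t1_ge.
have -> : t0%:Z + 1 + q * m%:Z + 1 = 0%N%:Z + 1 + (q + 1) * m%:Z.
  by rewrite -t0_last; lia.
rewrite !periodic_enum_nth //.
have last_le : (nth 0 s t0 <= n)%N by have /andP[] := s_range (mem_nth 0%N t0_lt).
have first_gt : (0 < nth 0 s 0)%N by have /andP[] := s_range (mem_nth 0%N s_pos).
nia.
Qed.

Lemma periodic_enum_geE (a : nat) (u : int) : (0 < a <= n)%N -> a \notin s ->
  (a%:Z <= periodic_enum u) = ((count (fun b => b < a)%N s)%:Z < u).
Proof.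
move=> /andP[a_gt0 a_le] a_notin; set k := count _ s.
have k_le : (k <= m)%N := count_size _ _.
have enum_k : periodic_enum k%:Z < a%:Z.
  have [k0 | k_gt0] := posnP k.
    have -> : k%:Z = m.-1%:Z + 1 + (-1) * m%:Z by rewrite k0; lia.
    have m1_lt : (m.-1 < m)%N by rewrite ltn_predL.
    rewrite periodic_enum_nth //.
    have : (nth 0 s m.-1 <= n)%N by have /andP[] := s_range (mem_nth 0%N m1_lt).
    lia.
  have -> : k%:Z = k.-1%:Z + 1 + 0 * m%:Z by lia.
  rewrite periodic_enum_nth; last by rewrite (leq_trans _ k_le) // prednK.
  by rewrite mul0r addr0 ltz_nat count_lt_nth ?prednK // (leq_trans _ k_le) ?prednK.
have enum_k1 : a%:Z < periodic_enum (k%:Z + 1).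
  have [k_lt | k_ge] := ltnP k m.
    rewrite -[_ + 1]addr0 -(mul0r m%:Z) periodic_enum_nth // mul0r addr0 ltz_nat.
    rewrite ltn_neqAle leqNgt count_lt_nth // ltnn andbT.
    by apply: contraNneq a_notin => ->; apply: mem_nth.
  have -> : k%:Z + 1 = 0%N%:Z + 1 + 1 * m%:Z by lia.
  rewrite periodic_enum_nth //.
  have : (0 < nth 0 s 0)%N by have /andP[] := s_range (mem_nth 0%N s_pos).
  lia.
have enum_le := ltW_homo periodic_enum_lt.
apply/idP/idP => [a_le_u | k_lt_u].
  by rewrite ltNge; apply/negP => /enum_le; lia.
by have := enum_le (k%:Z + 1) u; lia.
Qed.
End PeriodicEnum.

Definition dominated (z z' : int -> int) (d : int) : Prop :=
  forall t, z t <= z' (t + d).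

Definition least_shift (z z' : int -> int) (L : int) : Prop :=
  forall d, dominated z z' d <-> L <= d.

Lemma periodic_enum_least_shift (as_ bs : seq nat) (n : nat) :
  (0 < size as_)%N -> size as_ = size bs -> sorted ltn as_ -> sorted ltn bs ->
  (forall x, x \in as_ -> (0 < x <= n)%N) -> (forall x, x \in bs -> (0 < x <= n)%N) ->
  (forall x, x \in as_ -> x \notin bs) ->
  least_shift (periodic_enum as_ n) (periodic_enum bs n) (lch_aux as_ bs)%:Z.
Proof.
move=> as_pos sz sa sb ra rb dj d.
have bs_pos : (0 < size bs)%N by rewrite -sz.
have dominatedE : dominated (periodic_enum as_ n) (periodic_enum bs n) d <->
    forall t0, (t0 < size as_)%N ->
      (count (fun b => b < nth 0 as_ t0)%N bs)%:Z < t0%:Z + 1 + d.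
  split=> [dom t0 t0_lt | bound t].
    have := dom (t0%:Z + 1 + 0 * (size as_)%:Z).
    by rewrite periodic_enum_nth // mul0r !addr0 periodic_enum_geE ?ra ?dj ?mem_nth.
  have [t0 [q [t0_lt ->]]] := periodic_enum_cover as_pos t.
  have -> : t0%:Z + 1 + q * (size as_)%:Z + d = t0%:Z + 1 + d + q * (size bs)%:Z.
    by rewrite -sz; lia.
  rewrite periodic_enum_nth // periodic_enum_shift // lerD2r.
  by rewrite periodic_enum_geE ?ra ?dj ?mem_nth //; apply: bound.
rewrite dominatedE; have [d_neg | d_ge0] := ltP d 0.
  by split=> [/(_ 0%N as_pos) | ]; lia.
have -> : d = (absz d)%:Z by rewrite gez0_abs.
rewrite lez_nat lch_aux_leP //.
by split=> bound t0 /bound; lia.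
Qed.

Lemma least_shift_violated (z z' : int -> int) (L d : int) :
  least_shift z z' L -> (exists t, z' (t + d) < z t) <-> d < L.
Proof.
move=> least; split=> [[t zt] | d_lt].
  by rewrite ltNge; apply/negP => /least/(_ t); rewrite leNgt zt.
apply: NNPP => no_violation.
suff /least : dominated z z' d by lia.
by move=> t; rewrite leNgt; apply/negP => zt; apply: no_violation; exists t.
Qed.

Definition enum_stream (z w : int -> int) (r : int) : cell -> Prop :=
  fun c => exists t, c = (z t, w (t + r)).

Section ZStream.
Variables (z w : int -> int) (r : int).
Hypotheses (z_lt : {homo z : u v / u < v}) (w_le : {homo w : u v / u <= v}).

Lemma enum_stream_translate_numbering (c : int) :
  proper_numbering (enum_stream z w r) (fun t => (z (t + c), w (t + c + r))).
Proof.
split; first by move=> t; exists (t + c).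
split; first by move=> _ [t ->]; exists (t - c); rewrite subrK.
split; first by move=> t1 t2 [/(inc_inj (le_mono z_lt))/addIr].
by move=> t; split; [apply/ltW/z_lt | apply: w_le]; lia.
Qed.

Lemma enum_stream_numberingE (X : int -> cell) :
  proper_numbering (enum_stream z w r) X ->
  exists c, forall t, X t = (z (t + c), w (t + c + r)).
Proof.
move=> [X_in [X_onto [X_inj X_nw]]].
have X_in' t : exists k, X t == (z k, w (k + r)) by have [k ->] := X_in t; exists k.
pose idx t := xchoose (X_in' t).
have XE t : X t = (z (idx t), w (idx t + r)) := eqP (xchooseP (X_in' t)).
have idx_lt : {homo idx : u v / u < v}.
  apply: homo_ltz_lt => t; rewrite lt_neqAle; apply/andP; split.
    apply/negP => /eqP idx_eq.
    by have := X_inj t (t + 1); rewrite !XE idx_eq => /(_ erefl); lia.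
  by have [] := X_nw t; rewrite !XE /= (le_mono z_lt).
have idx_onto k : exists t, idx t = k.
  have [t Xt] := X_onto (z k, w (k + r)) (ex_intro _ k erefl).
  by exists t; move: Xt; rewrite XE => -[/(inc_inj (le_mono z_lt))].
by exists (idx 0) => t; rewrite XE (incr_surj_translation idx_lt idx_onto t).
Qed.
End ZStream.

Section Concurrency.
Variables (z w z' w' : int -> int) (LB LA : int).
Hypotheses (z_lt : {homo z : u v / u < v}) (z'_lt : {homo z' : u v / u < v}).
Hypotheses (w_le : {homo w : u v / u <= v}) (w'_le : {homo w' : u v / u <= v}).
Hypotheses (LB_least : least_shift z z' LB) (LA_least : least_shift w w' LA).

Lemma concurrent_enum_streamP (r r' : int) :
  concurrent (enum_stream z' w' r') (enum_stream z w r) <-> r' - r = LA - LB.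
Proof.
split.
- (* The non-northwest condition of a backward numbering follows from concurrency. *)
  move=> [X [X_num [Y [[Y_num [Y_nw _]] [[t1 Y_north] [t2 Y_west]]]]]].
  have [c XE] := enum_stream_numberingE z_lt X_num.
  have [e YE] := enum_stream_numberingE z'_lt Y_num.
  have domB : dominated z z' (e - c).
    move=> u; have [+ _] := Y_nw (u - c); rewrite XE YE /= subrK.
    by have -> : u + (e - c) = u - c + e by lia.
  have domA : dominated w w' (e - c + r' - r).
    move=> u; have [_ +] := Y_nw (u - r - c); rewrite XE YE /=.
    have -> : u - r - c + c + r = u by lia.
    by have -> : u + (e - c + r' - r) = u - r - c + e + r' by lia.
  have violB : exists u, z' (u + (e - c - 1)) < z u.
    exists (t1 + 1 + c); move: Y_north; rewrite XE YE /=.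
    by have -> : t1 + 1 + c + (e - c - 1) = t1 + e by lia.
  have violA : exists u, w' (u + (e - c + r' - r - 1)) < w u.
    exists (t2 + 1 + c + r); move: Y_west; rewrite XE YE /=.
    by have -> : t2 + 1 + c + r + (e - c + r' - r - 1) = t2 + e + r' by lia.
  have := proj1 (LB_least _) domB; have := proj1 (LA_least _) domA.
  have := proj1 (least_shift_violated _ LB_least) violB.
  have := proj1 (least_shift_violated _ LA_least) violA.
  lia.
- move=> r_eq.
  have [u zu] : exists u, z' (u + (LB - 1)) < z u.
    by apply/(least_shift_violated _ LB_least); lia.
  have [v wv] : exists v, w' (v + (LA - 1)) < w v.
    by apply/(least_shift_violated _ LA_least); lia.
  have north : z' (u - 1 + LB) < z (u - 1 + 1 + 0).
    have -> : u - 1 + 1 + 0 = u by lia.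
    by have -> : u - 1 + LB = u + (LB - 1) by lia.
  have west : w' (v - r - 1 + LB + r') < w (v - r - 1 + 1 + 0 + r).
    have -> : v - r - 1 + 1 + 0 + r = v by lia.
    by have -> : v - r - 1 + LB + r' = v + (LA - 1) by lia.
  exists (fun t => (z (t + 0), w (t + 0 + r))).
  split; first exact: enum_stream_translate_numbering.
  exists (fun t => (z' (t + LB), w' (t + LB + r'))).
  split; [split; [exact: enum_stream_translate_numbering | split] | split].
  + have [domB domA] : dominated z z' LB /\ dominated w w' LA.
      by split; [apply/LB_least | apply/LA_least].
    move=> t; split=> /=; first by rewrite addr0 domB.
    have -> : t + LB + r' = t + 0 + r + LA by lia.
    exact: domA.
  + by exists (u - 1) => -[/=]; rewrite leNgt north.
  + by exists (u - 1).
  + by exists (v - r - 1).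
Qed.
End Concurrency.

Lemma mem_reps n (A : {set 'I_n}) x :
  x \in reps A -> exists2 y, y \in A & x = (val y).+1.
Proof. by rewrite mem_sort => /mapP[y]; rewrite mem_enum; exists y. Qed.

Lemma reps_size n (A : {set 'I_n}) : size (reps A) = #|A|.
Proof. by rewrite size_sort size_map cardE. Qed.

Lemma reps_sorted n (A : {set 'I_n}) : sorted ltn (reps A).
Proof.
rewrite ltn_sorted_uniq_leq sort_uniq (sort_sorted leq_total) andbT.
by rewrite map_inj_uniq ?enum_uniq // => x y [] /val_inj.
Qed.

Lemma reps_range n (A : {set 'I_n}) x : x \in reps A -> (0 < x <= n)%N.
Proof. by case/mem_reps => y _ ->; rewrite ltn_ord. Qed.

Lemma reps_disjoint n (A B : {set 'I_n}) : [disjoint A & B] ->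
  forall x, x \in reps A -> x \notin reps B.
Proof.
move=> dj x /mem_reps[y yA ->]; apply/negP => /mem_reps[y' y'B] [] /val_inj y_eq.
by move: (disjointFr dj yA); rewrite y_eq y'B.
Qed.

Lemma zenum_lt n (A : {set 'I_n}) : (0 < #|A|)%N -> {homo zenum A : u v / u < v}.
Proof.
move=> A_pos; apply: periodic_enum_lt; rewrite ?reps_size //.
  exact: reps_sorted.
exact: reps_range.
Qed.

Lemma zenum_least_shift n (A A' : {set 'I_n}) :
  [disjoint A & A'] -> #|A| = #|A'| -> (0 < #|A|)%N ->
  least_shift (zenum A) (zenum A') (lch_aux (reps A) (reps A'))%:Z.
Proof.
move=> dj card_eq A_pos; apply: periodic_enum_least_shift; rewrite ?reps_size //.
- exact: reps_sorted.
- exact: reps_sorted.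
- exact: reps_range.
- exact: reps_range.
- exact: reps_disjoint.
Qed.

Lemma tabloid_adjacent_rows n (lam : seq nat) (T : seq {set 'I_n}) (i : nat) :
  is_partition lam -> is_tabloid lam T ->
  (1 <= i)%N -> (i < size lam)%N -> part lam i = part lam i.+1 ->
  [/\ [disjoint Defs.row T i & Defs.row T i.+1],
      #|Defs.row T i| = #|Defs.row T i.+1| & (0 < #|Defs.row T i|)%N].
Proof.
move=> /andP[_ /allP lam_pos] [_ [T_card T_dj]] i_ge1 i_lt part_eq.
split; first exact: T_dj.
  by rewrite !T_card ?i_ge1 ?(ltnW i_lt).
rewrite T_card ?i_ge1 ?(ltnW i_lt) //; apply: lam_pos; apply: mem_nth.
exact: leq_ltn_trans (leq_pred i) i_lt.
Qed.

Theorem theorem5p10 (n : nat) (lam : seq nat) (P Q : seq {set 'I_n}) (i : nat) :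
  (1 <= n)%N ->
  is_partition lam ->
  is_tabloid lam P -> is_tabloid lam Q ->
  (1 <= i)%N -> (i < size lam)%N -> part lam i = part lam i.+1 ->
  forall r : int,
    is_dominance_constant P Q i r <->
    r = ((lch P i)%:Z - (lch Q i)%:Z)%R.
Proof.
move=> _ lam_part P_tab Q_tab i_ge1 i_lt part_eq r.
have [P_dj P_eq P_pos] := tabloid_adjacent_rows lam_part P_tab i_ge1 i_lt part_eq.
have [Q_dj Q_eq Q_pos] := tabloid_adjacent_rows lam_part Q_tab i_ge1 i_lt part_eq.
have P_pos' : (0 < #|Defs.row P i.+1|)%N by rewrite -P_eq.
have Q_pos' : (0 < #|Defs.row Q i.+1|)%N by rewrite -Q_eq.
have := concurrent_enum_streamP (zenum_lt Q_pos) (zenum_lt Q_pos')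
  (ltW_homo (zenum_lt P_pos)) (ltW_homo (zenum_lt P_pos'))
  (zenum_least_shift Q_dj Q_eq Q_pos) (zenum_least_shift P_dj P_eq P_pos) 0 r.
by rewrite subr0.
Qed.
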